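(* In the reset-button collector, for all complex $z$ with $|z|\le1$, \[\mathbb Ez^{T_n}=\frac{(1-q_nz)\phi_n(q_nz)}{1-z+\rho_nz\phi_n(q_nz)}.\] The same identity also holds, with finite value, for any real $z\ge0$ such that $q_nz<1$ and $1-z+\rho_nz\phi_n(q_nz)>0$.
   Context: Reset-button collector: fix $n\ge1$. There are standard coupons $1,\dots,n$ and a reset coupon. At each discrete time $t=1,2,\dots$ one coupon is sampled independently: the reset coupon with probability $\rho_n\in(0,1)$, standard coupon $i$ with probability $p_{i,n}>0$, where $\sum_ip_{i,n}=q_n:=1-\rho_n$. Starting from the empty collection, drawn standard coupons are added; a reset empties the collection and collecting continues. $T_n$ is the first time all $n$ standard coupons are present. $C_n$ is the ordinary coupon collector completion time (number of i.i.d. draws until all types seen) with type probabilities $\pi_{i,n}=p_{i,n}/q_n$, and $\phi_n(z)=\mathbb Ez^{C_n}$. *)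

From HB Require Import structures.
From mathcomp Require Import all_boot all_order all_algebra.
From mathcomp Require Import Rstruct.
From Stdlib Require Import Reals.

Set Implicit Arguments.
Unset Strict Implicit.
Unset Printing Implicit Defensive.
Import GRing.Theory Num.Theory.

Local Open Scope ring_scope.

(* Collection after processing a word of draws: [None] is the reset coupon,
   [Some i] is standard coupon i. *)
Definition rb_step (n : nat) (S : {set 'I_n}) (x : option 'I_n) : {set 'I_n} :=
  if x is Some i then i |: S else set0.

Definition rb_state (n : nat) (w : seq (option 'I_n)) : {set 'I_n} :=
  foldl (@rb_step n) set0 w.

Definition rb_first_complete (n : nat) (w : seq (option 'I_n)) : bool :=
  (rb_state w == [set: 'I_n]) &&
  [forall k : 'I_(size w), rb_state (take k w) != [set: 'I_n]].

Definition cc_state (n : nat) (w : seq 'I_n) : {set 'I_n} := [set x in w].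

Definition cc_first_complete (n : nat) (w : seq 'I_n) : bool :=
  (cc_state w == [set: 'I_n]) &&
  [forall k : 'I_(size w), cc_state (take k w) != [set: 'I_n]].

Definition rb_prob (n : nat) (rho : R) (p : 'I_n -> R) (x : option 'I_n) : R :=
  if x is Some i then p i else rho.

Definition rb_T_law (n : nat) (rho : R) (p : 'I_n -> R) (t : nat) : R :=
  \sum_(w : t.-tuple (option 'I_n) | rb_first_complete w)
     \prod_(x <- w) rb_prob rho p x.

(* P(C_n = t) for the ordinary collector with type probabilities
   pi_i = p_i / q, q = 1 - rho. *)
Definition cc_C_law (n : nat) (rho : R) (p : 'I_n -> R) (t : nat) : R :=
  \sum_(w : t.-tuple 'I_n | cc_first_complete w)
     \prod_(i <- w) (p i / (1 - rho)).

Definition rb_model (n : nat) (rho : R) (p : 'I_n -> R) : Prop :=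
  leq 1 n /\ 0 < rho < 1 /\ (forall i, 0 < p i) /\
  \sum_(i < n) p i = 1 - rho.

From HB Require Import structures.
From mathcomp Require Import all_boot all_order all_algebra.
From mathcomp Require Import Rstruct.
From Stdlib Require Import Reals Lra.
From Coquelicot Require Import Coquelicot.

(* Decomposing according to the time k of the first reset gives the renewal
   equation
     P(T = t) = A_t + sum_(1 <= k <= t) rho U_(k-1) P(T = t - k),
   where A_t = q^t P(C = t) is the weight of the reset-free words completing
   the collection exactly at time t, and U_m that of the reset-free words of
   length m leaving it incomplete.  One more standard draw turns q U_m into
   U_(m+1) + A_(m+1), and U_0 = 1 - A_0.  In generating functions,
   T(z) = A(z) + rho z U(z) T(z) and (1 - q z) U(z) = 1 - A(z) with
   A(z) = phi(q z), and eliminating U gives the formula.  All coefficients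
   being nonnegative, everything converges absolutely at z once
   rho |z| U(|z|) < 1; for real z this is equivalent to
   1 - z + rho z phi(q z) > 0, which holds on the closed unit disk because
   phi(q) > 0. *)

Set Implicit Arguments.
Unset Strict Implicit.
Unset Printing Implicit Defensive.
Import Order.TTheory GRing.Theory Num.Theory.

Lemma forall_ord_recl m (P : nat -> bool) :
  [forall k : 'I_m.+1, P k] = P 0%nat && [forall k : 'I_m, P k.+1].
Proof.
apply/forallP/andP => [H | [P0 /forallP H] [[|k] lt_k_m] //].
  by split; [exact: (H ord0) | apply/forallP => k; exact: (H (lift ord0 k))].
exact: H (@Ordinal m k lt_k_m).
Qed.

Lemma big_tuple_cons (R : Type) (idx : R) (op : Monoid.com_law idx)
    (T : finType) m (P : pred (seq T)) (F : seq T -> R) :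
  \big[op/idx]_(w : m.+1.-tuple T | P w) F w =
  \big[op/idx]_(x : T) \big[op/idx]_(w : m.-tuple T | P (x :: w)) F (x :: w).
Proof.
rewrite pair_big_dep (reindex (fun xw : T * m.-tuple T => [tuple of xw.1 :: xw.2])) /=.
  by apply: eq_bigl => -[x w].
exists (fun w : m.+1.-tuple T => (thead w, [tuple of behead w])) => [[x w] _ | w _] /=.
  by congr pair; apply: val_inj.
by rewrite [in RHS](tuple_eta w).
Qed.

Lemma big_option (R : Type) (idx : R) (op : Monoid.com_law idx)
    (T : finType) (F : option T -> R) :
  \big[op/idx]_(x : option T) F x = op (F None) (\big[op/idx]_(i : T) F (Some i)).
Proof.
rewrite (bigD1 None) //=; congr (op _ _).
rewrite (reindex_omap Some (fun x : option T => x)) //=; last by case.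
by apply: eq_bigl => i; rewrite eqxx.
Qed.

Lemma foldl_setU1 (T : finType) (S : {set T}) (w : seq T) :
  foldl (fun S x => x |: S) S w = S :|: [set x in w].
Proof.
elim: w S => [|x w IHw] S /=; first by apply/setP => y; rewrite !inE orbF.
by rewrite IHw; apply/setP => y; rewrite !inE orbCA orbA.
Qed.

Section FirstHit.
Local Open Scope ring_scope.
Variables (A : Type) (X : finType) (f : A -> X -> A) (P : pred A).

Fixpoint first_hit (s : A) (w : seq X) : bool :=
  if w is x :: w' then ~~ P s && first_hit (f s x) w' else P s.

Lemma first_hitE s w :
  first_hit s w =
  P (foldl f s w) && [forall k : 'I_(size w), ~~ P (foldl f s (take k w))].
Proof.
elim: w s => [|x w IHw] s /=.
  have -> : [forall k : 'I_0, ~~ P (foldl f s (take k [::]))] by apply/forallP => -[].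
  by rewrite andbT.
by rewrite (forall_ord_recl _ (fun k => ~~ P (foldl f s (take k (x :: w))))) /= IHw andbCA.
Qed.

Variables (R : pzSemiRingType) (wt : X -> R).

Definition hit_weight t s : R :=
  \sum_(w : t.-tuple X | first_hit s w) \prod_(x <- w) wt x.

Lemma hit_weight0 s : hit_weight 0 s = (P s)%:R.
Proof.
rewrite /hit_weight big_mkcond (big_pred1 [tuple]) /=.
  by rewrite big_nil; case: (P s).
by move=> w; rewrite [w]tuple0 /= eqxx.
Qed.

Lemma hit_weightS t s :
  hit_weight t.+1 s = if P s then 0 else \sum_x wt x * hit_weight t (f s x).
Proof.
rewrite /hit_weight (big_tuple_cons _ _ (first_hit s) (fun w => \prod_(x <- w) wt x)) /=.
case: (P s) => /=.
  by rewrite big1 // => x _; rewrite big_pred0.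
by apply: eq_bigr => x _; rewrite mulr_sumr; apply: eq_bigr => w _; rewrite big_cons.
Qed.

End FirstHit.

(* From the collection S: [first_full_weight] is the law of T, and
   [first_full_noreset] and [not_full_noreset] are the weights A and U. *)
Section Collector.
Local Open Scope ring_scope.
Variables (n : nat) (rho : R) (p : 'I_n -> R).

Definition first_full_weight : nat -> {set 'I_n} -> R :=
  hit_weight (@rb_step n) (pred1 [set: 'I_n]) (rb_prob rho p).

Definition first_full_noreset : nat -> {set 'I_n} -> R :=
  hit_weight (fun S (i : 'I_n) => i |: S) (pred1 [set: 'I_n]) p.

Fixpoint not_full_noreset m S : R :=
  if m is m'.+1 then \sum_i p i * not_full_noreset m' (i |: S)
  else (S != [set: 'I_n])%:R.

Lemma first_full_weightS t S :
  first_full_weight t.+1 S =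
  if S == [set: 'I_n] then 0
  else rho * first_full_weight t set0 + \sum_i p i * first_full_weight t (i |: S).
Proof. by rewrite /first_full_weight hit_weightS big_option. Qed.

Lemma first_full_noresetS t S :
  first_full_noreset t.+1 S =
  if S == [set: 'I_n] then 0 else \sum_i p i * first_full_noreset t (i |: S).
Proof. exact: hit_weightS. Qed.

Lemma not_full_noreset_setT m : not_full_noreset m [set: 'I_n] = 0.
Proof.
elim: m => [|m IHm] /=; first by rewrite eqxx.
by rewrite big1 // => i _; rewrite setUT IHm mulr0.
Qed.

Lemma first_full_weight_renewal t S :
  first_full_weight t S =
  first_full_noreset t S +
  \sum_(j < t) rho * not_full_noreset j S * first_full_weight (t - j.+1) set0.
Proof.
elim: t S => [|t IHt] S.
  by rewrite /first_full_weight /first_full_noreset !hit_weight0 big_ord0 addr0.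
rewrite first_full_weightS first_full_noresetS; case: eqP => [-> | /eqP notfull].
  by rewrite big1 ?addr0 // => j _; rewrite not_full_noreset_setT mulr0 mul0r.
rewrite big_ord_recl /= (negbTE notfull) mulr1 subn1 /=.
under eq_bigr => i _ do rewrite IHt mulrDr.
rewrite big_split /= addrCA; congr (_ + (_ + _)).
under eq_bigr => i _ do rewrite mulr_sumr.
rewrite exchange_big /=; apply: eq_bigr => j _.
rewrite /bump add1n add0n subSS [X in X * _]mulr_sumr mulr_suml; apply: eq_bigr => i _.
by rewrite !mulrA [p i * rho]mulrC.
Qed.

Lemma rb_T_lawE t : rb_T_law rho p t = first_full_weight t set0.
Proof. by apply: eq_bigl => w; rewrite first_hitE. Qed.

Lemma cc_C_law_scaled k :
  1 - rho != 0 -> cc_C_law rho p k * (1 - rho) ^+ k = first_full_noreset k set0.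
Proof.
move=> q_neq0; rewrite /cc_C_law mulr_suml; apply: eq_big => [w | w _].
  rewrite first_hitE /cc_first_complete /cc_state foldl_setU1 set0U.
  by congr (_ && _); apply: eq_forallb => j; rewrite foldl_setU1 set0U.
case: w => s /= /eqP <-; elim: s => [|i s IHs] /=.
  by rewrite !big_nil mulr1.
by rewrite !big_cons exprS mulrACA divfK ?IHs.
Qed.

Hypothesis p_ge0 : forall i, 0 <= p i.
Hypothesis sum_p : \sum_i p i = 1 - rho.

Lemma not_full_noreset0 S : not_full_noreset 0 S = 1 - first_full_noreset 0 S.
Proof. by rewrite /first_full_noreset hit_weight0 /=; case: (_ == _); rewrite ?subrr ?subr0. Qed.

Lemma not_full_noresetS m S :
  not_full_noreset m.+1 S = (1 - rho) * not_full_noreset m S - first_full_noreset m.+1 S.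
Proof.
elim: m S => [|m IHm] S.
  rewrite first_full_noresetS /=; case: eqP => [-> | _] /=.
    by rewrite mulr0 subr0; apply: big1 => i _; rewrite setUT eqxx mulr0.
  rewrite mulr1 -sum_p -sumrB; apply: eq_bigr => i _.
  rewrite /first_full_noreset hit_weight0 /=.
  by case: (_ == _); rewrite ?mulr0 ?mulr1 ?subrr ?subr0.
rewrite [LHS]/= (eq_bigr _ (fun i _ => congr1 (GRing.mul (p i)) (IHm (i |: S)))).
under eq_bigr => i _ do rewrite mulrBr mulrCA.
rewrite sumrB -mulr_sumr first_full_noresetS; congr (_ * _ - _).
by case: eqP => [-> | _] //; apply: big1 => i _; rewrite setUT first_full_noresetS eqxx mulr0.
Qed.

Lemma one_sub_rho_ge0 : 0 <= 1 - rho.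
Proof. by rewrite -sum_p sumr_ge0. Qed.

Lemma first_full_noreset_ge0 t S : 0 <= first_full_noreset t S.
Proof. by apply: sumr_ge0 => w _; apply: prodr_ge0. Qed.

Lemma not_full_noreset_ge0 m S : 0 <= not_full_noreset m S.
Proof.
elim: m S => [|m IHm] S /=; first exact: ler0n.
by apply: sumr_ge0 => i _; apply: mulr_ge0.
Qed.

Lemma not_full_noreset_le m S : not_full_noreset m S <= (1 - rho) ^+ m.
Proof.
elim: m S => [|m IHm] S /=; first by rewrite expr0 lern1 leq_b1.
rewrite -/(not_full_noreset m.+1 S) not_full_noresetS exprS lerBlDr.
by apply: ler_wpDr; [exact: first_full_noreset_ge0 | exact: ler_wpM2l one_sub_rho_ge0 _ _ (IHm S)].
Qed.

Lemma first_full_noreset_le m S : first_full_noreset m S <= (1 - rho) ^+ m.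
Proof.
case: m => [|m]; first by rewrite /first_full_noreset hit_weight0 expr0 lern1 leq_b1.
have split_step : (1 - rho) * not_full_noreset m S =
    not_full_noreset m.+1 S + first_full_noreset m.+1 S.
  by rewrite not_full_noresetS subrK.
rewrite exprS (le_trans _ (ler_wpM2l one_sub_rho_ge0 (not_full_noreset_le m S))) //.
by rewrite split_step lerDr not_full_noreset_ge0.
Qed.

Lemma first_full_weight_ge0 t S : 0 <= rho -> 0 <= first_full_weight t S.
Proof. by move=> rho_ge0; apply: sumr_ge0 => w _; apply: prodr_ge0 => -[i|] _ /=. Qed.

Lemma first_full_noreset_gt0 S :
  (forall i, 0 < p i) -> 0 < first_full_noreset #|~: S| S.
Proof.
move=> p_gt0; suff: forall k S, #|~: S| = k -> 0 < first_full_noreset k S by apply.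
elim=> [|k IHk] {}S card_k.
  move/cards0_eq/(congr1 (@setC _)): card_k; rewrite setCK setC0 => ->.
  by rewrite /first_full_noreset hit_weight0 /= eqxx ltr01.
have [i Si] : exists i, i \in ~: S by apply/set0Pn; rewrite -card_gt0 card_k.
rewrite first_full_noresetS ifN; last by apply: contraTN Si => /eqP ->; rewrite setCT inE.
rewrite (bigD1 i) //= ltr_pwDl ?mulr_gt0 ?p_gt0 ?IHk //.
  by move: card_k; rewrite (cardsD1 i) Si add1n setCU setIC -setDE => -[].
by apply: sumr_ge0 => j _; rewrite mulr_ge0 ?first_full_noreset_ge0.
Qed.

End Collector.

Local Open Scope R_scope.

Lemma sum_le_series (f : nat -> R) l N :
  (forall t, 0 <= f t) -> is_series f l -> sum_f_R0 f N <= l.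
Proof. by move=> f_ge0 /is_series_Reals fl; apply: sum_incr. Qed.

Lemma series_ge0 (f : nat -> R) l : (forall t, 0 <= f t) -> is_series f l -> 0 <= l.
Proof. by move=> f_ge0 fl; have /= := sum_le_series 0 f_ge0 fl; have := f_ge0 0%nat; lra. Qed.

Lemma series_gt0 (f : nat -> R) l m :
  (forall t, 0 <= f t) -> 0 < f m -> is_series f l -> 0 < l.
Proof.
move=> f_ge0 fm_gt0 fl; have := sum_le_series m f_ge0 fl.
case: m fm_gt0 => [|m] /= fm_gt0; first lra.
by have := cond_pos_sum f m f_ge0; lra.
Qed.

Lemma ex_series_pow_le (f : nat -> R) (x r : R) :
  0 <= r -> 0 <= x -> x * r < 1 -> (forall t, 0 <= f t <= x ^ t) ->
  ex_series (fun t => f t * r ^ t).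
Proof.
move=> r_ge0 x_ge0 xr_lt1 f_bounds.
apply: (@ex_series_le R_AbsRing R_CompleteNormedModule _ (fun t => (x * r) ^ t)).
  move=> t; rewrite /norm /= /abs /= Rpow_mult_distr Rabs_pos_eq.
    by apply: Rmult_le_compat_r; [exact: pow_le | exact: (proj2 (f_bounds t))].
  by apply: Rmult_le_pos; [exact: (proj1 (f_bounds t)) | exact: pow_le].
by exists (/ (1 - x * r)); apply: is_series_geom; rewrite Rabs_pos_eq; nra.
Qed.

Lemma sum_f_R0_convolution (b g : nat -> R) N :
  sum_f_R0 (fun t => sum_f_R0 (fun k => b k * g (t - k)%nat) t) N =
  sum_f_R0 (fun k => b k * sum_f_R0 g (N - k)) N.
Proof.
elim: N => [|N IHN] //=; rewrite IHN subnn /=.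
rewrite (sum_eq (fun k => b k * sum_f_R0 g (N.+1 - k))
                (fun k => b k * sum_f_R0 g (N - k) + b k * g (N.+1 - k)%nat)).
  by rewrite sum_plus; ring.
by move=> k /ssrnat.leP k_le_N; rewrite subSn //=; ring.
Qed.

Lemma sum_n_fst (f : nat -> C) N : fst (sum_n f N) = sum_f_R0 (fun k => fst (f k)) N.
Proof. by elim: N => [|N IHN]; rewrite ?sum_O ?sum_Sn //= -IHN. Qed.

Lemma sum_n_snd (f : nat -> C) N : snd (sum_n f N) = sum_f_R0 (fun k => snd (f k)) N.
Proof. by elim: N => [|N IHN]; rewrite ?sum_O ?sum_Sn //= -IHN. Qed.

Lemma is_series_C (f : nat -> C) l :
  is_series f l <->
  is_series (fun k => fst (f k)) (fst l) /\ is_series (fun k => snd (f k)) (snd l).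
Proof.
rewrite /is_series; split.
  move=> fl; split; apply/filterlim_locally => eps;
    apply: filter_imp (proj1 (filterlim_locally _ _) fl eps) => N [fstN sndN];
    rewrite sum_n_Reals; [rewrite -sum_n_fst | rewrite -sum_n_snd]; assumption.
move=> [fstl sndl]; apply/filterlim_locally => eps.
apply: filter_imp (filter_and _ _ (proj1 (filterlim_locally _ _) fstl eps)
                                 (proj1 (filterlim_locally _ _) sndl eps)).
move=> N; rewrite !sum_n_Reals -sum_n_fst -sum_n_snd; exact.
Qed.

Lemma is_series_RtoC (f : nat -> R) l :
  is_series f l -> is_series (fun k => RtoC (f k)) (RtoC l).
Proof.
move=> fl; apply/is_series_C; split => //=.
apply: (is_lim_seq_ext (fun _ => 0) (sum_n (fun _ => 0)) 0); last exact: is_lim_seq_const.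
by move=> N; rewrite sum_n_const Rmult_0_r.
Qed.

Lemma is_series_unique_C (f : nat -> C) l l' :
  is_series f l -> is_series f l' -> l = l'.
Proof. by move=> fl fl'; exact: (filterlim_locally_unique _ _ _ fl fl'). Qed.

Lemma ex_series_Rabs_of_Cmod (g : C -> R) (f : nat -> C) :
  (forall w, Rabs (g w) <= Cmod w) ->
  ex_series (fun k => Cmod (f k)) -> ex_series (fun k => Rabs (g (f k))).
Proof.
move=> g_le; apply: (@ex_series_le R_AbsRing R_CompleteNormedModule) => k.
by rewrite /norm /= /abs /= Rabs_Rabsolu.
Qed.

Lemma Rabs_fst_le_Cmod (w : C) : Rabs (fst w) <= Cmod w.
Proof. exact: Rle_trans (Rmax_l _ _) (Rmax_Cmod w). Qed.

Lemma Rabs_snd_le_Cmod (w : C) : Rabs (snd w) <= Cmod w.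
Proof. exact: Rle_trans (Rmax_r _ _) (Rmax_Cmod w). Qed.

Lemma is_series_C_mult (x y : nat -> C) X Y :
  is_series x X -> is_series y Y ->
  ex_series (fun k => Cmod (x k)) -> ex_series (fun k => Cmod (y k)) ->
  is_series (fun t => sum_n (fun k => x k * y (t - k)%nat)%C t) (X * Y)%C.
Proof.
move=> /is_series_C [x1 x2] /is_series_C [y1 y2] x_abs y_abs.
have Ax1 := ex_series_Rabs_of_Cmod Rabs_fst_le_Cmod x_abs.
have Ax2 := ex_series_Rabs_of_Cmod Rabs_snd_le_Cmod x_abs.
have Ay1 := ex_series_Rabs_of_Cmod Rabs_fst_le_Cmod y_abs.
have Ay2 := ex_series_Rabs_of_Cmod Rabs_snd_le_Cmod y_abs.
apply/is_series_C; split.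
  rewrite -[(X * Y)%C.1]/(plus (X.1 * Y.1) (opp (X.2 * Y.2))).
  apply: (is_series_ext _ _ _ _ (is_series_minus _ _ _ _ (is_series_mult _ _ _ _ x1 y1 Ax1 Ay1)
                                        (is_series_mult _ _ _ _ x2 y2 Ax2 Ay2))) => t.
  by rewrite sum_n_fst /plus /opp /= minus_sum.
rewrite -[(X * Y)%C.2]/(plus (X.1 * Y.2) (X.2 * Y.1)).
apply: (is_series_ext _ _ _ _ (is_series_plus _ _ _ _ (is_series_mult _ _ _ _ x1 y2 Ax1 Ay2)
                                     (is_series_mult _ _ _ _ x2 y1 Ax2 Ay1))) => t.
by rewrite sum_n_snd /plus /= sum_plus.
Qed.

Lemma Cmod_series_le (f : nat -> C) l L :
  is_series f l -> is_series (fun k => Cmod (f k)) L -> Cmod l <= L.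
Proof.
move=> fl fL.
have norm_lim : is_lim_seq (fun N => Cmod (sum_n f N)) (Cmod l).
  exact: (filterlim_comp _ _ _ _ _ _ _ _ fl (@filterlim_norm C_AbsRing C_NormedModule l)).
exact: (is_lim_seq_le _ _ (Cmod l) L
          (fun N => @norm_sum_n_m C_AbsRing C_NormedModule f 0 N) norm_lim fL).
Qed.

Lemma sum_f_R0_mono (f : nat -> R) m N :
  (forall t, 0 <= f t) -> (m <= N)%nat -> sum_f_R0 f m <= sum_f_R0 f N.
Proof.
move=> f_ge0 /subnK <-; elim: (N - m)%nat => [|d IHd] /=; first by rewrite add0n; lra.
by have := f_ge0 (d + m).+1; lra.
Qed.

Lemma RtoC_sum_f_R0 (f : nat -> R) N :
  RtoC (sum_f_R0 f N) = sum_n (fun k => RtoC (f k)) N.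
Proof. by elim: N => [|N IHN] /=; rewrite ?sum_O ?sum_Sn // RtoC_plus IHN. Qed.

Lemma Cmod_scaled_pow (x : R) (z : C) t : 0 <= x -> Cmod (x * z ^ t)%C = x * Cmod z ^ t.
Proof. by move=> x_ge0; rewrite Cmod_mult Cmod_R Cmod_pow Rabs_pos_eq. Qed.

Lemma ex_series_scaled_C (f : nat -> R) (z : C) :
  (forall t, 0 <= f t) -> ex_series (fun t => f t * Cmod z ^ t) ->
  exists l : C, is_series (fun t => f t * z ^ t)%C l.
Proof.
move=> f_ge0 f_abs; have [l fl] : ex_series (fun t => f t * z ^ t)%C.
  apply: (@ex_series_le C_AbsRing C_CompleteNormedModule _ _ _ f_abs) => t.
  by rewrite /norm /= Cmod_scaled_pow //; exact: Rle_refl.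
by exists l.
Qed.

Lemma one_minus_neq0 (w : C) : Cmod w < 1 -> (1 - w)%C <> 0.
Proof.
move=> w_lt1 w1; have w_eq1 : RtoC 1 = w by apply/Ceq_minus.
by move: w_lt1; rewrite -w_eq1 Cmod_1; lra.
Qed.

Lemma is_series_RtoC_scaled (f : nat -> R) r l :
  is_series (fun t => f t * r ^ t) l -> is_series (fun t => f t * RtoC r ^ t)%C (RtoC l).
Proof.
by move=> /is_series_RtoC fl; apply: (is_series_ext _ _ _ _ fl) => t; rewrite RtoC_mult RtoC_pow.
Qed.

Definition first_reset (rho : R) (u : nat -> R) (k : nat) : R :=
  if k is j.+1 then rho * u j else 0.

Section RenewalGeneratingFunction.
Variables (rho : R) (a u T : nat -> R).
Local Notation q := (1 - rho)%R.

Hypothesis rho_bounds : 0 < rho < 1.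
Hypothesis a_bounds : forall t, 0 <= a t <= q ^ t.
Hypothesis u_bounds : forall t, 0 <= u t <= q ^ t.
Hypothesis T_ge0 : forall t, 0 <= T t.
Hypothesis u_0 : u 0%nat = 1 - a 0%nat.
Hypothesis u_S : forall m, u m.+1 = q * u m - a m.+1.
Hypothesis T_renewal :
  forall t, T t = a t + sum_f_R0 (fun k => first_reset rho u k * T (t - k)%nat) t.

Local Notation b := (first_reset rho u).

Lemma first_reset_ge0 k : 0 <= b k.
Proof. by case: k => [|k] /=; [lra | have := u_bounds k; nra]. Qed.

Lemma ex_series_scaled (f : nat -> R) r :
  (forall t, 0 <= f t <= q ^ t) -> 0 <= r -> q * r < 1 ->
  ex_series (fun t => f t * r ^ t).
Proof. by move=> f_bounds r_ge0 qr_lt1; apply: (ex_series_pow_le r_ge0 _ qr_lt1 f_bounds); lra. Qed.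

Lemma is_series_first_reset r U :
  is_series (fun t => u t * r ^ t) U -> is_series (fun k => b k * r ^ k) (rho * r * U).
Proof.
move=> uU; apply: is_series_decr_1; rewrite /= Rmult_0_l opp_zero plus_zero_r.
apply: (is_series_ext _ _ _ _ (is_series_scal_l (rho * r) _ _ uU)) => k.
by rewrite /scal /= /mult /=; ring.
Qed.

Lemma is_series_first_reset_C (z : C) U :
  is_series (fun t => u t * z ^ t)%C U ->
  is_series (fun k => b k * z ^ k)%C (rho * z * U)%C.
Proof.
move=> uU; apply: is_series_decr_1; rewrite /= Cmult_0_l opp_zero plus_zero_r.
apply: (is_series_ext _ _ _ _ (is_series_scal_l (rho * z)%C _ _ uU)) => k.
by rewrite /scal /= /mult /= RtoC_mult; ring.
Qed.

Lemma renewal_scaled r t :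
  T t * r ^ t =
  a t * r ^ t + sum_f_R0 (fun k => (b k * r ^ k) * (T (t - k)%nat * r ^ (t - k))) t.
Proof.
rewrite T_renewal Rmult_plus_distr_r [sum_f_R0 _ _ * _]Rmult_comm scal_sum; congr (_ + _).
apply: sum_eq => k /ssrnat.leP k_le_t.
by rewrite -[in r ^ t](subnKC k_le_t) -plusE pow_add; ring.
Qed.

Lemma renewal_scaled_C (z : C) t :
  (T t * z ^ t)%C =
  (a t * z ^ t + sum_n (fun k => (b k * z ^ k) * (T (t - k)%nat * z ^ (t - k)%nat)) t)%C.
Proof.
rewrite T_renewal RtoC_plus Cmult_plus_distr_r RtoC_sum_f_R0.
rewrite -[(sum_n _ _ * _)%C]/(@mult C_Ring _ _) -sum_n_mult_r; congr Cplus.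
apply: sum_n_ext_loc => k /ssrnat.leP k_le_t.
by rewrite /mult /= -[in (z ^ t)%C](subnKC k_le_t) Cpow_add_r RtoC_mult; ring.
Qed.

Lemma u_generating_C (z A U : C) :
  is_series (fun t => a t * z ^ t)%C A -> is_series (fun t => u t * z ^ t)%C U ->
  ((1 - q * z) * U = 1 - A)%C.
Proof.
move=> aA uU.
have aA_tail : is_series (fun t => a t.+1 * z ^ t.+1)%C (A - a 0%nat)%C.
  apply: (is_series_incr_1 (fun t => a t * z ^ t)%C).
  by rewrite (_ : plus _ _ = A) // /plus /= Cmult_1_r; ring.
have uU' : is_series (fun t => u t * z ^ t)%C (1 - A + q * z * U)%C.
  apply: is_series_decr_1.
  have -> : plus (1 - A + q * z * U)%C (opp (u 0%nat * z ^ 0)%C) =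
            plus (scal (q * z)%C U) (opp (A - a 0%nat)%C).
    by rewrite /plus /opp /scal /= /mult /= u_0 !RtoC_minus; ring.
  apply: (is_series_ext _ _ _ _ (is_series_minus _ _ _ _ (is_series_scal_l _ _ _ uU) aA_tail)) => t.
  by rewrite /plus /opp /scal /= /mult /= u_S [RtoC (_ * _ - _)]RtoC_minus RtoC_mult; ring.
transitivity (U - q * z * U)%C; first ring.
by rewrite {1}(is_series_unique_C uU uU'); ring.
Qed.

Lemma ex_series_T_scaled r Ar Ur :
  0 <= r -> is_series (fun t => a t * r ^ t) Ar -> is_series (fun t => u t * r ^ t) Ur ->
  rho * r * Ur < 1 -> ex_series (fun t => T t * r ^ t).
Proof.
move=> r_ge0 aA uU B_lt1; set g := fun t => T t * r ^ t.
have g_ge0 t : 0 <= g t by apply: Rmult_le_pos; [exact: T_ge0 | exact: pow_le].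
have a_ge0 t : 0 <= a t * r ^ t.
  by apply: Rmult_le_pos; [exact: (proj1 (a_bounds t)) | exact: pow_le].
have b_ge0 k : 0 <= b k * r ^ k by apply: Rmult_le_pos; [exact: first_reset_ge0 | exact: pow_le].
have partial_sum_bound N : sum_f_R0 g N <= Ar + rho * r * Ur * sum_f_R0 g N.
  rewrite {1}(sum_eq _ _ N (fun t _ => renewal_scaled r t)) sum_plus.
  rewrite (sum_f_R0_convolution (fun k => b k * r ^ k) g).
  apply: Rplus_le_compat; first exact: sum_le_series.
  apply: (Rle_trans _ (sum_f_R0 (fun k => b k * r ^ k * sum_f_R0 g N) N)).
    apply: sum_Rle => k _; apply: Rmult_le_compat_l => //.
    exact: sum_f_R0_mono (leq_subr k N).
  rewrite -scal_sum [sum_f_R0 g N * _]Rmult_comm; apply: Rmult_le_compat_r.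
    exact: cond_pos_sum.
  exact: sum_le_series (is_series_first_reset uU).
apply: (@ex_finite_lim_seq_incr _ (Ar / (1 - rho * r * Ur))) => [N | N].
  by rewrite sum_Sn /plus /=; have := g_ge0 N.+1; lra.
rewrite sum_n_Reals; apply/Rle_div_r; first lra.
by have := partial_sum_bound N; nra.
Qed.

Lemma renewal_solution_C (z A U L : C) :
  L = (A + rho * z * U * L)%C -> ((1 - q * z) * U = 1 - A)%C ->
  (1 - rho * z * U)%C <> 0 -> (1 - q * z)%C <> 0 ->
  L = ((1 - q * z) * A / (1 - z + rho * z * A))%C.
Proof.
move=> L_fix UA B_neq1 q_neq1.
have -> : (1 - z + rho * z * A = (1 - q * z) * (1 - rho * z * U))%C.
  transitivity (1 - q * z - rho * z * ((1 - q * z) * U))%C; last by rewrite RtoC_minus; ring.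
  by rewrite UA RtoC_minus; ring.
have -> : A = (L * (1 - rho * z * U))%C.
  by transitivity (A + rho * z * U * L - rho * z * U * L)%C; [ring | rewrite -L_fix; ring].
by field.
Qed.

Lemma T_generating_formula_C (z : C) Ur :
  q * Cmod z < 1 -> is_series (fun t => u t * Cmod z ^ t) Ur ->
  rho * Cmod z * Ur < 1 ->
  exists A, is_series (fun t => a t * z ^ t)%C A /\
    is_series (fun t => T t * z ^ t)%C ((1 - q * z) * A / (1 - z + rho * z * A))%C.
Proof.
move=> qr_lt1 uUr B_lt1; have r_ge0 := Cmod_ge_0 z.
have a_ge0 t : 0 <= a t := proj1 (a_bounds t).
have u_ge0 t : 0 <= u t := proj1 (u_bounds t).
have [Ar aAr] := ex_series_scaled a_bounds r_ge0 qr_lt1.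
have T_abs := ex_series_T_scaled r_ge0 aAr uUr B_lt1.
have [A aA] := ex_series_scaled_C a_ge0 (ex_intro _ _ aAr).
have [U uU] := ex_series_scaled_C u_ge0 (ex_intro _ _ uUr).
have [L TL] := ex_series_scaled_C T_ge0 T_abs.
exists A; split => //.
have bB := is_series_first_reset_C uU.
have b_abs : ex_series (fun k => Cmod (b k * z ^ k)%C).
  exists (rho * Cmod z * Ur); apply: (is_series_ext _ _ _ _ (is_series_first_reset uUr)) => k.
  by rewrite Cmod_scaled_pow //; apply: first_reset_ge0.
have T_abs' : ex_series (fun t => Cmod (T t * z ^ t)%C).
  case: T_abs => lT TlT; exists lT.
  by apply: (is_series_ext _ _ _ _ TlT) => t; rewrite Cmod_scaled_pow.
have L_fix : L = (A + rho * z * U * L)%C.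
  apply: (is_series_unique_C TL).
  have := is_series_plus _ _ _ _ aA (is_series_C_mult bB TL b_abs T_abs').
  by apply: is_series_ext => t; rewrite renewal_scaled_C.
have B_neq1 : (1 - rho * z * U)%C <> 0.
  apply: one_minus_neq0; rewrite !Cmod_mult Cmod_R Rabs_pos_eq; last lra.
  apply: Rle_lt_trans B_lt1; apply: Rmult_le_compat_l; first by apply: Rmult_le_pos; lra.
  apply: Cmod_series_le uU _; apply: (is_series_ext _ _ _ _ uUr) => t.
  by rewrite Cmod_scaled_pow.
have q_neq1 : (1 - q * z)%C <> 0.
  by apply: one_minus_neq0; rewrite Cmod_mult Cmod_R Rabs_pos_eq //; lra.
by rewrite -(renewal_solution_C L_fix (u_generating_C aA uU) B_neq1 q_neq1).
Qed.

Lemma u_generating r Ar Ur :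
  is_series (fun t => a t * r ^ t) Ar -> is_series (fun t => u t * r ^ t) Ur ->
  (1 - q * r) * Ur = 1 - Ar.
Proof.
move=> /is_series_RtoC_scaled aA /is_series_RtoC_scaled uU.
by apply: RtoC_inj; rewrite RtoC_mult !RtoC_minus RtoC_mult -(u_generating_C aA uU) RtoC_minus.
Qed.

Lemma first_reset_series_lt1 r Ar Ur :
  0 <= r -> q * r < 1 ->
  is_series (fun t => a t * r ^ t) Ar -> is_series (fun t => u t * r ^ t) Ur ->
  0 < 1 - r + rho * r * Ar -> rho * r * Ur < 1.
Proof.
move=> r_ge0 qr_lt1 aA uU pos; have := u_generating aA uU.
have : 0 <= rho * r by apply: Rmult_le_pos; lra.
nra.
Qed.

Hypothesis a_pos : exists m, 0 < a m.

Lemma denominator_pos_unit_disk r Ar :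
  0 <= r <= 1 -> is_series (fun t => a t * r ^ t) Ar -> 0 < 1 - r + rho * r * Ar.
Proof.
move=> [r_ge0 r_le1] aA.
have a_scaled_ge0 t : 0 <= a t * r ^ t.
  by apply: Rmult_le_pos; [exact: (proj1 (a_bounds t)) | exact: pow_le].
case: (Rle_lt_or_eq_dec _ _ r_le1) => [r_lt1 | r_eq1].
  have : 0 <= rho * r * Ar.
    by apply: Rmult_le_pos; [apply: Rmult_le_pos; lra | exact: series_ge0 a_scaled_ge0 aA].
  lra.
case: a_pos => m am_gt0; rewrite r_eq1 in aA a_scaled_ge0 *.
have am_scaled_gt0 : 0 < a m * 1 ^ m by rewrite pow1 Rmult_1_r.
by have := series_gt0 a_scaled_ge0 am_scaled_gt0 aA; nra.
Qed.

Lemma T_generating_unit_disk (z : C) :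
  Cmod z <= 1 ->
  exists A, is_series (fun t => a t * z ^ t)%C A /\
    is_series (fun t => T t * z ^ t)%C ((1 - q * z) * A / (1 - z + rho * z * A))%C.
Proof.
move=> z_le1; have r_ge0 := Cmod_ge_0 z.
have qr_lt1 : q * Cmod z < 1 by nra.
have [Ar aAr] := ex_series_scaled a_bounds r_ge0 qr_lt1.
have [Ur uUr] := ex_series_scaled u_bounds r_ge0 qr_lt1.
apply: T_generating_formula_C qr_lt1 uUr (first_reset_series_lt1 r_ge0 qr_lt1 aAr uUr _).
exact: denominator_pos_unit_disk.
Qed.

Lemma T_generating_real (z : R) :
  0 <= z -> q * z < 1 ->
  exists A, is_series (fun t => a t * z ^ t) A /\
    (0 < 1 - z + rho * z * A ->
     is_series (fun t => T t * z ^ t) ((1 - q * z) * A / (1 - z + rho * z * A))).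
Proof.
move=> z_ge0 qz_lt1.
have [Ar aAr] := ex_series_scaled a_bounds z_ge0 qz_lt1.
have [Ur uUr] := ex_series_scaled u_bounds z_ge0 qz_lt1.
exists Ar; split => // pos; have B_lt1 := first_reset_series_lt1 z_ge0 qz_lt1 aAr uUr pos.
have Cmod_z : Cmod (RtoC z) = z by rewrite Cmod_R Rabs_pos_eq.
rewrite -Cmod_z in uUr qz_lt1 B_lt1.
have [A [aA TA]] := T_generating_formula_C qz_lt1 uUr B_lt1.
rewrite (is_series_unique_C aA (is_series_RtoC_scaled aAr)) in TA.
have real_value : ((1 - q * RtoC z) * RtoC Ar / (1 - RtoC z + rho * RtoC z * RtoC Ar))%C =
                  RtoC ((1 - q * z) * Ar / (1 - z + rho * z * Ar)).
  rewrite RtoC_div; last lra.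
  congr (Cdiv _ _); first by rewrite RtoC_mult (RtoC_minus 1 (q * z)) RtoC_mult.
  by rewrite RtoC_plus (RtoC_minus 1 z) !RtoC_mult.
rewrite real_value in TA; move/is_series_C: TA => [TA _]; apply: (is_series_ext _ _ _ _ TA) => t.
by rewrite -RtoC_pow -RtoC_mult.
Qed.

Variable c : nat -> R.
Hypothesis c_scaled : forall k, c k * q ^ k = a k.

Theorem renewal_generating_function :
  (forall z : C, Cmod z <= 1 ->
     exists phi : C,
       is_series (fun k => c k * (q * z) ^ k)%C phi /\
       is_series (fun t => T t * z ^ t)%C
         ((1 - q * z) * phi / (1 - z + rho * z * phi))%C) /\
  (forall z : R, 0 <= z -> q * z < 1 ->
     exists phi : R,
       is_series (fun k => c k * (q * z) ^ k) phi /\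
       (0 < 1 - z + rho * z * phi ->
        is_series (fun t => T t * z ^ t) ((1 - q * z) * phi / (1 - z + rho * z * phi)))).
Proof.
split=> [z /T_generating_unit_disk | z z_ge0 /(T_generating_real z_ge0)] [A [aA TA]].
  exists A; split => //; apply: (is_series_ext _ _ _ _ aA) => k.
  by rewrite Cpow_mult_l -RtoC_pow -c_scaled RtoC_mult Cmult_assoc.
exists A; split => //; apply: (is_series_ext _ _ _ _ aA) => k.
by rewrite Rpow_mult_distr -c_scaled Rmult_assoc.
Qed.

End RenewalGeneratingFunction.

Lemma rb_T_law_renewal n rho (p : 'I_n -> R) t :
  rb_T_law rho p t =
  first_full_noreset p t set0 +
  sum_f_R0 (fun k => first_reset rho (not_full_noreset p ^~ set0) k * rb_T_law rho p (t - k)) t.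
Proof.
rewrite rb_T_lawE first_full_weight_renewal sum_f_R0E big_mkord big_ord_recl /= Rmult_0_l.
rewrite GRing.add0r; congr (_ + _); apply: eq_bigr => j _.
by rewrite rb_T_lawE.
Qed.

Theorem mainTheorem9 (n : nat) (rho : R) (p : 'I_n -> R) :
  rb_model rho p ->
  (* complex part: |z| <= 1 *)
  (forall z : C, (Cmod z <= 1)%R ->
     exists phi : C,
       is_series (fun k => Cmult (RtoC (cc_C_law rho p k))
                                 (Cpow (Cmult (RtoC (1 - rho)%R) z) k)) phi /\
       is_series (fun t => Cmult (RtoC (rb_T_law rho p t)) (Cpow z t))
         (Cdiv (Cmult (Cminus (RtoC 1) (Cmult (RtoC (1 - rho)%R) z)) phi)
               (Cplus (Cminus (RtoC 1) z) (Cmult (Cmult (RtoC rho) z) phi)))) /\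
  (* real part: z >= 0, q z < 1, 1 - z + rho z phi(q z) > 0 *)
  (forall z : R, (0 <= z)%R -> ((1 - rho) * z < 1)%R ->
     exists phi : R,
       is_series (fun k => (cc_C_law rho p k * ((1 - rho) * z) ^ k)%R) phi /\
       ((0 < 1 - z + rho * z * phi)%R ->
        is_series (fun t => (rb_T_law rho p t * z ^ t)%R)
          ((1 - (1 - rho) * z) * phi / (1 - z + rho * z * phi))%R)).
Proof.
move=> [_ [/andP [rho_gt0 rho_lt1] [p_gt0 sum_p]]].
have p_ge0 i : (0 <= p i)%O := ltW (p_gt0 i).
apply: (@renewal_generating_function rho (fun t => first_full_noreset p t set0)
          (fun m => not_full_noreset p m set0) (rb_T_law rho p)) => [|t|t|t||m|t||k].
- by split; apply/RltP.
- by split; apply/RleP; rewrite ?RpowE ?first_full_noreset_ge0 ?first_full_noreset_le.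
- by split; apply/RleP; rewrite ?RpowE ?not_full_noreset_ge0 ?not_full_noreset_le.
- by apply/RleP; rewrite rb_T_lawE first_full_weight_ge0 // ltW.
- exact: not_full_noreset0.
- exact: not_full_noresetS.
- exact: rb_T_law_renewal.
- by exists #|~: (set0 : {set 'I_n})|; apply/RltP; exact: first_full_noreset_gt0.
- by rewrite RpowE; apply: cc_C_law_scaled; rewrite subr_eq0 eq_sym lt_eqF.
Qed.
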